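(* Let $\sigma,\eta>0$ and $\mathscr{C}$ be a family of balls as in the context. Let $B\in\mathscr{C}$ and $x\in B$. Then $y\in B^{(4\lceil|x-y|\rceil)}$ for every $y\in\mathbb{R}^3$.
   Context: Cover: for constants $\sigma,\eta>0$, $\mathscr{C}$ is a family of closed balls in $\mathbb{R}^3$ with $\bigcup_{B\in\mathscr{C}}B=\mathbb{R}^3$ and $|B|\geq 4\pi/3$ for all $B\in\mathscr{C}$, such that (i) each ball in $\mathscr{C}$ intersects at most $\sigma$ balls in $\mathscr{C}$, and (ii) if $B,B'\in\mathscr{C}$ intersect then $\eta^{-1}\le |B|^{1/3}/|B'|^{1/3}\le\eta$. Layers: for $B\in\mathscr{C}$ set $B^{(0)}:=B$, $P^{(0)}:=\{B\}$, and for $n\ge1$, $P^{(n)}:=\{B'\in\mathscr{C}: B'\cap B^{(n-1)}\neq\emptyset\}$, $B^{(n)}:=\bigcup_{B'\in P^{(n)}}B'$. *)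

From Stdlib Require Import Reals Lra List ZArith.
Open Scope R_scope.

Definition pt := (R * R * R)%type.

Definition dist3 (x y : pt) : R :=
  let '(x1, x2, x3) := x in let '(y1, y2, y3) := y in
  sqrt ((x1 - y1) ^ 2 + (x2 - y2) ^ 2 + (x3 - y3) ^ 2).

Record ball3 := Ball3 { center : pt ; radius : R }.

Definition in_ball (B : ball3) (x : pt) : Prop := dist3 (center B) x <= radius B.

(* Lebesgue measure |B| of the closed ball B (radius >= 0). *)
Definition vol (B : ball3) : R := 4 / 3 * PI * radius B ^ 3.

Definition intersect (B B' : ball3) : Prop := exists z, in_ball B z /\ in_ball B' z.

(* ceiling of a real number, as an integer: least integer >= d *)
Definition Rceil (d : R) : Z := (1 - up (- d))%Z.

Definition Cover (sigma eta : R) (C : ball3 -> Prop) : Prop :=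
  (forall x : pt, exists B, C B /\ in_ball B x) /\
  (forall B, C B -> vol B >= 4 * PI / 3) /\
  (forall B, C B -> exists l : list ball3, NoDup l /\ INR (length l) <= sigma /\
      forall B', C B' -> intersect B B' -> In B' l) /\
  (forall B B', C B -> C B' -> intersect B B' ->
      / eta <= Rpower (vol B) (1/3) / Rpower (vol B') (1/3) <= eta).

Fixpoint layer (C : ball3 -> Prop) (B : ball3) (n : nat) : pt -> Prop :=
  match n with
  | O => in_ball B
  | S m => fun y => exists B', C B' /\ (exists z, in_ball B' z /\ layer C B m z)
                               /\ in_ball B' y
  end.

From Coquelicot Require Import Coquelicot.
From Stdlib Require Import Reals ZArith Lra Lia Psatz List Classical.
Open Scope R_scope.

(* Balls of C have radius at least 1, since |B| >= 4 pi / 3. If z is in B^(m) and |z - y| <= 1,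
   pick A in C through z and D in C through y, so that |a - d| <= r_A + r_D + 1 for their centers.
   By Stewart's theorem every ball of C meeting the segment [a, d] meets A or D. Only finitely many
   balls meet A (resp. D), so the parameters t in [0, 1] whose point lies in a ball meeting A, resp.
   D, form two closed sets covering [0, 1]; by connectedness some point of the segment lies in a ball
   F meeting A and in a ball G meeting D. The chain A, F, G, D puts y in B^(m+4), and walking from x
   to y in ceil |x - y| steps of length at most 1 proves the theorem. *)

Lemma dist3_norm (x y : pt) : dist3 x y = norm (minus x y).
Proof.
  destruct x as [[x1 x2] x3], y as [[y1 y2] y3].
  change (norm _) with
    (sqrt (sqrt (Rabs (x1 - y1) ^ 2 + Rabs (x2 - y2) ^ 2) ^ 2 + Rabs (x3 - y3) ^ 2)).
  rewrite !pow2_abs, pow2_sqrt; [reflexivity|].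
  apply Rplus_le_le_0_compat; apply pow2_ge_0.
Qed.

Lemma dist3_ge0 x y : 0 <= dist3 x y.
Proof. rewrite dist3_norm; apply norm_ge_0. Qed.

Lemma dist3_triangle x y z : dist3 x z <= dist3 x y + dist3 y z.
Proof.
  rewrite !dist3_norm, (minus_trans y x z).
  exact (norm_triangle (minus x y) (minus y z)).
Qed.

Lemma dist3_sym x y : dist3 x y = dist3 y x.
Proof. rewrite !dist3_norm, <- opp_minus. exact (norm_opp (minus y x)). Qed.

Lemma sum_sqr3_ge0 u v w : 0 <= u ^ 2 + v ^ 2 + w ^ 2.
Proof. repeat apply Rplus_le_le_0_compat; apply pow2_ge_0. Qed.

Lemma dist3_eq0 x y : dist3 x y = 0 -> x = y.
Proof.
  destruct x as [[x1 x2] x3], y as [[y1 y2] y3]; intros H.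
  apply sqrt_eq_0 in H; [|apply sum_sqr3_ge0].
  pose proof (pow2_ge_0 (x1 - y1)); pose proof (pow2_ge_0 (x2 - y2));
    pose proof (pow2_ge_0 (x3 - y3)).
  f_equal; [f_equal|]; apply Rminus_diag_uniq, Rsqr_0_uniq; rewrite Rsqr_pow2; lra.
Qed.

Definition lerp (a b : pt) (t : R) : pt :=
  let '(a1, a2, a3) := a in let '(b1, b2, b3) := b in
  (a1 + t * (b1 - a1), a2 + t * (b2 - a2), a3 + t * (b3 - a3)).

Lemma lerp0 a b : lerp a b 0 = a.
Proof. destruct a as [[a1 a2] a3], b as [[b1 b2] b3]; simpl; f_equal; [f_equal|]; ring. Qed.

Lemma lerp1 a b : lerp a b 1 = b.
Proof. destruct a as [[a1 a2] a3], b as [[b1 b2] b3]; simpl; f_equal; [f_equal|]; ring. Qed.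

Lemma dist3_lerp a b s t : dist3 (lerp a b s) (lerp a b t) = Rabs (s - t) * dist3 a b.
Proof.
  destruct a as [[a1 a2] a3], b as [[b1 b2] b3]; unfold dist3, lerp.
  rewrite <- sqrt_Rsqr_abs, <- sqrt_mult_alt by apply Rle_0_sqr.
  f_equal; unfold Rsqr; ring.
Qed.

Lemma dist3_lerp_l a b t : 0 <= t -> dist3 (lerp a b t) a = t * dist3 a b.
Proof. intros ht; rewrite <- (lerp0 a b) at 2; rewrite dist3_lerp, Rminus_0_r, Rabs_pos_eq; lra. Qed.

Lemma dist3_lerp_r a b t : t <= 1 -> dist3 (lerp a b t) b = (1 - t) * dist3 a b.
Proof. intros ht; rewrite <- (lerp1 a b) at 2; rewrite dist3_lerp, Rabs_left1 by lra; ring. Qed.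

Lemma stewart a d f t :
  (1 - t) * dist3 f a ^ 2 + t * dist3 f d ^ 2
  = dist3 f (lerp a d t) ^ 2 + t * (1 - t) * dist3 a d ^ 2.
Proof.
  destruct a as [[a1 a2] a3], d as [[d1 d2] d3], f as [[f1 f2] f3]; unfold dist3, lerp.
  rewrite !pow2_sqrt by apply sum_sqr3_ge0; ring.
Qed.

Lemma gap_ineq a b c s u : 1 <= a -> 1 <= b -> 1 <= c -> 0 <= s -> 0 <= u -> s + u <= 1 ->
  (a + s) * (b + u) * ((a + s) + (b + u)) <=
  (b + u) * (a ^ 2 + 2 * a * c) + (a + s) * (b ^ 2 + 2 * b * c).
Proof.
  intros ha hb hc hs hu hsu.
  assert (hs1 : (b + u) * s ^ 2 <= 2 * b * (a + s) * s).
  { assert (0 <= (b + u) * s * (1 - s)) by (apply Rmult_le_pos; nra).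
    assert (0 <= s * (b - u)) by nra.
    assert (0 <= b * s * (a + s - 1)) by (apply Rmult_le_pos; nra).
    nra. }
  assert (hu1 : (a + s) * u ^ 2 <= 2 * a * (b + u) * u).
  { assert (0 <= (a + s) * u * (1 - u)) by (apply Rmult_le_pos; nra).
    assert (0 <= u * (a - s)) by nra.
    assert (0 <= a * u * (b + u - 1)) by (apply Rmult_le_pos; nra).
    nra. }
  assert (0 <= (b + u) * a * (c - s - u)) by (apply Rmult_le_pos; nra).
  assert (0 <= (a + s) * b * (c - s - u)) by (apply Rmult_le_pos; nra).
  nra.
Qed.

Lemma segment_point_near_end a d f rA rD rF t :
  1 <= rA -> 1 <= rD -> 1 <= rF -> dist3 a d <= rA + rD + 1 -> 0 <= t <= 1 ->
  dist3 f (lerp a d t) <= rF -> dist3 f a <= rA + rF \/ dist3 f d <= rD + rF.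
Proof.
  intros hA hD hF hL ht hf.
  pose proof (dist3_lerp_l a d t ltac:(lra)) as hpa.
  pose proof (dist3_lerp_r a d t ltac:(lra)) as hpd.
  pose proof (stewart a d f t) as St.
  set (L := dist3 a d) in *; set (p := lerp a d t) in *.
  pose proof (dist3_triangle f p a); pose proof (dist3_triangle f p d).
  destruct (Rle_or_lt (t * L) rA) as [|hα]; [left; lra|].
  destruct (Rle_or_lt ((1 - t) * L) rD) as [|hβ]; [right; lra|].
  destruct (Rle_or_lt (dist3 f a) (rA + rF)) as [|ha]; [left; lra|].
  destruct (Rle_or_lt (dist3 f d) (rD + rF)) as [|hd]; [right; lra|].
  exfalso.
  set (α := t * L) in *; set (β := (1 - t) * L) in *.
  assert (hLαβ : L = α + β) by (unfold α, β; ring).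
  assert (Sβ : β * (rA + rF) ^ 2 < β * dist3 f a ^ 2)
    by (apply Rmult_lt_compat_l; [lra| nra]).
  assert (Sα : α * (rD + rF) ^ 2 < α * dist3 f d ^ 2)
    by (apply Rmult_lt_compat_l; [lra| nra]).
  assert (Sp : L * dist3 f p ^ 2 <= L * rF ^ 2).
  { apply Rmult_le_compat_l; [lra|]. apply pow_incr; split; [apply dist3_ge0| lra]. }
  assert (StL : β * dist3 f a ^ 2 + α * dist3 f d ^ 2 = L * dist3 f p ^ 2 + α * β * L).
  { transitivity (L * ((1 - t) * dist3 f a ^ 2 + t * dist3 f d ^ 2));
      [| rewrite St]; unfold α, β; ring. }
  (* Stewart's identity times L contradicts gap_ineq at the overshoots of p beyond the
     spheres of radius rA about a and rD about d. *)
  pose proof (gap_ineq rA rD rF (α - rA) (β - rD) hA hD hF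
                ltac:(lra) ltac:(lra) ltac:(lra)) as G.
  replace (rA + (α - rA)) with α in G by ring; replace (rD + (β - rD)) with β in G by ring.
  clearbody α β L. subst L.
  lra.
Qed.

Lemma in_ball_center B : 0 <= radius B -> in_ball B (center B).
Proof.
  intros h; unfold in_ball.
  destruct (center B) as [[c1 c2] c3]; unfold dist3.
  replace ((c1 - c1) ^ 2 + (c2 - c2) ^ 2 + (c3 - c3) ^ 2) with 0 by ring.
  rewrite sqrt_0; exact h.
Qed.

Lemma intersect_refl B : 0 <= radius B -> intersect B B.
Proof. intros h; exists (center B); split; apply in_ball_center, h. Qed.

Lemma intersect_sym B B' : intersect B B' -> intersect B' B.
Proof. intros [z [h h']]; exists z; auto. Qed.

Lemma intersect_of_dist B B' : 0 <= radius B -> 0 <= radius B' ->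
  dist3 (center B) (center B') <= radius B + radius B' -> intersect B B'.
Proof.
  intros hr hr' hL.
  set (L := dist3 (center B) (center B')) in *.
  destruct (Rle_or_lt L (radius B)) as [hle|hlt].
  - exists (center B'); split; [exact hle| apply in_ball_center, hr'].
  - set (t := radius B / L).
    assert (htL : t * L = radius B) by (unfold t; field; lra).
    assert (ht0 : 0 <= t)
      by (unfold t, Rdiv; apply Rmult_le_pos; [lra| left; apply Rinv_0_lt_compat; lra]).
    assert (ht1 : t <= 1) by nra.
    exists (lerp (center B) (center B') t); unfold in_ball; split.
    + rewrite dist3_sym, dist3_lerp_l by lra; fold L; lra.
    + rewrite dist3_sym, dist3_lerp_r by lra; fold L; nra.
Qed.

Definition closed_pred (P : R -> Prop) : Prop :=
  forall m, (forall eps, 0 < eps -> exists t, Rabs (t - m) < eps /\ P t) -> P m.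

Lemma closed_pred_ext (P Q : R -> Prop) :
  (forall t, P t <-> Q t) -> closed_pred P -> closed_pred Q.
Proof.
  intros hPQ hP m hm; apply hPQ, hP; intros eps heps.
  destruct (hm eps heps) as [t [ht hQ]]; exists t; split; [exact ht| apply hPQ, hQ].
Qed.

Lemma closed_pred_or (P Q : R -> Prop) :
  closed_pred P -> closed_pred Q -> closed_pred (fun t => P t \/ Q t).
Proof.
  intros hP hQ m hm.
  destruct (classic (forall eps, 0 < eps -> exists t, Rabs (t - m) < eps /\ P t))
    as [hPm|hPm]; [left; exact (hP m hPm)|right].
  apply not_all_ex_not in hPm as [delta hdelta].
  apply imply_to_and in hdelta as [hdelta0 hnoP].
  apply hQ; intros eps heps.
  pose proof (Rmin_l eps delta); pose proof (Rmin_r eps delta).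
  destruct (hm (Rmin eps delta) (Rmin_pos _ _ heps hdelta0)) as [t [ht [hPt|hQt]]].
  - exfalso; apply hnoP; exists t; split; [lra| exact hPt].
  - exists t; split; [lra| exact hQt].
Qed.

Lemma closed_pred_and_const (A : Prop) (P : R -> Prop) :
  closed_pred P -> closed_pred (fun t => A /\ P t).
Proof.
  intros hP m hm; destruct (hm 1 Rlt_0_1) as [_ [_ [hA _]]].
  split; [exact hA|]; apply hP; intros eps heps.
  destruct (hm eps heps) as [t [ht [_ hPt]]]; exists t; split; assumption.
Qed.

Lemma closed_pred_exists_in {A : Type} (l : list A) (P : A -> R -> Prop) :
  (forall F, closed_pred (P F)) -> closed_pred (fun t => exists F, In F l /\ P F t).
Proof.
  intros hP; induction l as [|F l IH].
  - intros m hm; destruct (hm 1 Rlt_0_1) as [_ [_ [_ [[] _]]]].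
  - apply (closed_pred_ext (fun t => P F t \/ exists F', In F' l /\ P F' t)).
    + intros t; split.
      * intros [h|[F' [hin h]]]; [exists F| exists F']; simpl; auto.
      * intros [F' [[<-|hin] h]]; [left| right; exists F']; auto.
    + apply closed_pred_or; [apply hP| exact IH].
Qed.

Lemma closed_pred_in_ball_lerp a d (F : ball3) :
  closed_pred (fun t => in_ball F (lerp a d t)).
Proof.
  intros m hm; unfold in_ball.
  apply le_epsilon; intros eps heps.
  pose proof (dist3_ge0 a d) as hL; set (L := dist3 a d) in *.
  assert (hdelta : 0 < eps / (L + 1)) by (apply Rdiv_lt_0_compat; lra).
  destruct (hm _ hdelta) as [t [ht hFt]].
  assert (hclose : Rabs (t - m) * (L + 1) < eps).
  { replace eps with (eps / (L + 1) * (L + 1)) by (field; lra).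
    apply Rmult_lt_compat_r; lra. }
  pose proof (dist3_triangle (center F) (lerp a d t) (lerp a d m)) as T.
  rewrite dist3_lerp in T; fold L in T.
  assert (Rabs (t - m) * L <= Rabs (t - m) * (L + 1))
    by (apply Rmult_le_compat_l; [apply Rabs_pos| lra]).
  unfold in_ball in hFt; lra.
Qed.

Lemma unit_interval_connected (P Q : R -> Prop) :
  closed_pred P -> closed_pred Q -> (forall t, 0 <= t <= 1 -> P t \/ Q t) ->
  P 0 -> Q 1 -> exists m, P m /\ Q m.
Proof.
  intros hP hQ hPQ hP0 hQ1.
  set (E t := 0 <= t <= 1 /\ P t).
  destruct (completeness E) as [m [hub hlub]].
  { exists 1; intros t [ht _]; lra. }
  { exists 0; split; [lra| exact hP0]. }
  assert (hm0 : 0 <= m) by (apply hub; split; [lra| exact hP0]).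
  assert (hm1 : m <= 1) by (apply hlub; intros t [ht _]; lra).
  exists m; split.
  - apply hP; intros eps heps; apply NNPP; intros hnone.
    enough (m <= m - eps / 2) by lra.
    apply hlub; intros t [ht hPt].
    pose proof (hub t (conj ht hPt)).
    destruct (Rle_or_lt t (m - eps)); [lra|].
    exfalso; apply hnone; exists t; split; [rewrite Rabs_left1; lra| exact hPt].
  - destruct (Req_dec m 1) as [->|hne]; [exact hQ1|].
    apply hQ; intros eps heps.
    pose proof (Rmin_l (m + eps / 2) 1); pose proof (Rmin_r (m + eps / 2) 1).
    set (t := Rmin (m + eps / 2) 1) in *.
    assert (hmt : m < t) by (apply Rmin_glb_lt; lra).
    assert (ht : 0 <= t <= 1) by lra.
    exists t; split; [rewrite Rabs_right; lra|].
    destruct (hPQ t ht) as [hPt|hQt]; [|exact hQt].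
    pose proof (hub t (conj ht hPt)); lra.
Qed.

Lemma layer_S C B k E u w :
  C E -> in_ball E u -> layer C B k u -> in_ball E w -> layer C B (S k) w.
Proof. intros hE hu hku hw; exists E; split; [exact hE| split; [exists u; auto| exact hw]]. Qed.

Section LocallyFiniteCover.

Variable C : ball3 -> Prop.
Hypothesis C_cover : forall x, exists B, C B /\ in_ball B x.
Hypothesis C_radius : forall B, C B -> 1 <= radius B.
Hypothesis C_finite : forall B, C B -> exists l, forall B', C B' -> intersect B B' -> In B' l.

Lemma cover_chain A D : C A -> C D ->
  dist3 (center A) (center D) <= radius A + radius D + 1 ->
  exists F G, C F /\ C G /\ intersect A F /\ intersect F G /\ intersect G D.
Proof.
  intros hA hD hL.
  pose proof (C_radius A hA) as rA; pose proof (C_radius D hD) as rD.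
  destruct (C_finite A hA) as [lA hlA]; destruct (C_finite D hD) as [lD hlD].
  set (a := center A) in *; set (d := center D) in *.
  set (meets E l t := exists F, In F l /\ (C F /\ intersect E F) /\ in_ball F (lerp a d t)).
  assert (meets_closed : forall E l, closed_pred (meets E l)).
  { intros E l; apply closed_pred_exists_in; intros F.
    apply closed_pred_and_const, closed_pred_in_ball_lerp. }
  destruct (unit_interval_connected (meets A lA) (meets D lD)) as
    [m [[F [_ [[hF hAF] hmF]]] [G [_ [[hG hDG] hmG]]]]];
    [apply meets_closed| apply meets_closed| | | |].
  - intros t ht; destruct (C_cover (lerp a d t)) as [H [hH hpH]].
    pose proof (C_radius H hH) as rH.
    destruct (segment_point_near_end a d (center H) (radius A) (radius D) (radius H) t)
      as [near|near]; try assumption; [left| right].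
    + assert (hAH : intersect A H)
        by (apply intersect_of_dist; try lra; rewrite dist3_sym; exact near).
      exists H; repeat split; auto.
    + assert (hDH : intersect D H)
        by (apply intersect_of_dist; try lra; rewrite dist3_sym; exact near).
      exists H; repeat split; auto.
  - assert (hAA : intersect A A) by (apply intersect_refl; lra).
    exists A; repeat split; auto.
    rewrite lerp0; apply in_ball_center; lra.
  - assert (hDD : intersect D D) by (apply intersect_refl; lra).
    exists D; repeat split; auto.
    rewrite lerp1; apply in_ball_center; lra.
  - exists F, G; repeat split; auto.
    + exists (lerp a d m); split; assumption.
    + apply intersect_sym, hDG.
Qed.

Lemma layer_step B m z y : layer C B m z -> dist3 z y <= 1 -> layer C B (4 + m) y.
Proof.
  intros hz hzy.
  destruct (C_cover z) as [A [hA hzA]]; destruct (C_cover y) as [D [hD hyD]].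
  destruct (cover_chain A D) as
    [F [G [hF [hG [[u1 [hu1A hu1F]] [[u2 [hu2F hu2G]] [u3 [hu3G hu3D]]]]]]]]; try assumption.
  { unfold in_ball in *; rewrite dist3_sym in hyD.
    pose proof (dist3_triangle (center A) z (center D));
      pose proof (dist3_triangle z y (center D)); lra. }
  apply (layer_S C B _ D u3); auto.
  apply (layer_S C B _ G u2); auto.
  apply (layer_S C B _ F u1); auto.
  apply (layer_S C B _ A z); auto.
Qed.

Lemma layer_reach B n : forall m x y,
  layer C B m x -> dist3 x y <= INR n -> layer C B (m + 4 * n) y.
Proof.
  induction n as [|n IH]; intros m x y hx hxy.
  - replace y with x by (apply dist3_eq0; simpl in hxy; pose proof (dist3_ge0 x y); lra).
    rewrite Nat.add_0_r; exact hx.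
  - pose proof (S_INR n) as hSn; pose proof (pos_INR n) as hn.
    set (N := INR (S n)) in *.
    assert (hinv : 1 / N * N = 1) by (field; lra).
    assert (ht : 0 <= 1 / N <= 1).
    { split; [apply Rlt_le, Rdiv_lt_0_compat; lra|].
      apply (Rmult_le_reg_r N); lra. }
    replace (m + 4 * S n)%nat with (4 + m + 4 * n)%nat by lia.
    apply (IH _ (lerp x y (1 / N))).
    + apply (layer_step _ _ x); [exact hx|].
      rewrite dist3_sym, dist3_lerp_l by lra.
      apply Rle_trans with (1 / N * N); [apply Rmult_le_compat_l|]; lra.
    + rewrite dist3_lerp_r by lra.
      apply Rle_trans with ((1 - 1 / N) * N); [apply Rmult_le_compat_l|]; lra.
Qed.

End LocallyFiniteCover.

Lemma radius_ge1_of_vol B : vol B >= 4 * PI / 3 -> 1 <= radius B.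
Proof.
  unfold vol; intros hvol; pose proof PI_RGT_0.
  set (r := radius B) in *.
  assert (hr3 : 1 <= r ^ 3).
  { apply (Rmult_le_reg_l (4 / 3 * PI)); lra. }
  destruct (Rle_or_lt 1 r) as [|hr]; [assumption|exfalso].
  assert (0 < r ^ 2 + r + 1) by nra.
  assert (r ^ 3 - 1 = (r - 1) * (r ^ 2 + r + 1)) by ring.
  nra.
Qed.

Lemma le_INR_Rceil d : 0 <= d -> d <= INR (Z.to_nat (Rceil d)).
Proof.
  intros hd; destruct (archimed (- d)) as [_ hup].
  assert (hceil : d <= IZR (Rceil d)) by (unfold Rceil; rewrite minus_IZR; lra).
  rewrite INR_IZR_INZ, Z2Nat.id; [exact hceil|].
  apply le_IZR; lra.
Qed.

Theorem corollary3p2 (sigma eta : R) (C : ball3 -> Prop) :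
  0 < sigma -> 0 < eta -> Cover sigma eta C ->
  forall (B : ball3) (x : pt), C B -> in_ball B x ->
  forall y : pt, layer C B (4 * Z.to_nat (Rceil (dist3 x y)))%nat y.
Proof.
  intros _ _ [C_cover [hvol [hfin _]]] B x _ hx y.
  assert (C_radius : forall E, C E -> 1 <= radius E)
    by (intros E hE; apply radius_ge1_of_vol, hvol, hE).
  assert (C_finite : forall E, C E -> exists l, forall E', C E' -> intersect E E' -> In E' l).
  { intros E hE; destruct (hfin E hE) as [l [_ [_ hl]]]; exists l; exact hl. }
  apply (layer_reach C C_cover C_radius C_finite B _ 0 x y hx).
  apply le_INR_Rceil, dist3_ge0.
Qed.
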